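(* If $X$ is a compact metric space and $T:X\to X$ is continuous, then for the system of coefficients $c_S^n=2^{-n}$, $$\lim_{\varepsilon\to0^+}\operatorname{Asc}_\varepsilon(X,T)=\lim_{\varepsilon\to0^+}\operatorname{Asc}'_\varepsilon(X,T)=h_{\mathrm{top}}(X,T).$$
   Context: $n^*=\{0,\dots,n-1\}$; for $S\subset n^*$, $r(S,\varepsilon)$ is the minimum cardinality of an $(S,\varepsilon)$-spanning set ($F$ such that every $x$ has $y\in F$ with $d(T^ix,T^iy)\le\varepsilon$ for all $i\in S$) and $s(S,\varepsilon)$ the maximum cardinality of an $(S,\varepsilon)$-separated set ($E$ such that distinct $x,y\in E$ have some $i\in S$ with $d(T^ix,T^iy)>\varepsilon$). $\operatorname{Asc}_\varepsilon(X,T)=\limsup_n\frac1n\sum_{S\subset n^*}c_S^n\log r(S,\varepsilon)$ and $\operatorname{Asc}'_\varepsilon(X,T)=\limsup_n\frac1n\sum_{S\subset n^*}c_S^n\log s(S,\varepsilon)$. $h_{\mathrm{top}}$ is topological entropy. *)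

From HB Require Import structures.
From mathcomp Require Import all_boot all_order all_algebra.
From mathcomp Require Import all_classical all_reals all_analysis.
Set Implicit Arguments. Unset Strict Implicit. Unset Printing Implicit Defensive.
Import Order.TTheory GRing.Theory Num.Theory.
Import numFieldNormedType.Exports.
Local Open Scope classical_set_scope.
Local Open Scope ring_scope.

Section Defs.
Context {R : realType} {X : metricType R} (T : X -> X).

Local Notation d := (@mdist R X).

Definition spanning (n : nat) (S : {set 'I_n}) (eps : R) (F : seq X) : Prop :=
  forall x : X, exists2 y, y \in F &
    forall i : 'I_n, i \in S -> d (iter i T x) (iter i T y) <= eps.

Definition separated (n : nat) (S : {set 'I_n}) (eps : R) (E : seq X) : Prop :=
  uniq E /\ forall x y, x \in E -> y \in E -> x != y ->
    exists2 i : 'I_n, i \in S & eps < d (iter i T x) (iter i T y).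

Definition spanning_card (n : nat) (S : {set 'I_n}) (eps : R) : pred nat :=
  fun k => `[< exists F : seq X, size F = k /\ spanning S eps F >].

Definition separated_card (n : nat) (S : {set 'I_n}) (eps : R) : pred nat :=
  fun k => `[< exists E : seq X, size E = k /\ separated S eps E >].

(* r(S,eps): minimal cardinality of an (S,eps)-spanning set
   (default 0 if none is finite; never happens for compact X). *)
Definition r_span n (S : {set 'I_n}) (eps : R) : nat :=
  match pselect (exists k, spanning_card S eps k) with
  | left h => ex_minn h
  | right _ => 0%N
  end.

Lemma separated_card0 n (S : {set 'I_n}) eps : exists k, separated_card S eps k.
Proof.
exists 0%N; apply/asboolP; exists [::]; split; first by [].
split; first by [].
by move=> x y; rewrite in_nil.
Qed.

(* s(S,eps): maximal cardinality of an (S,eps)-separated set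
   (default 0 if unbounded; never happens for compact X). *)
Definition s_sep n (S : {set 'I_n}) (eps : R) : nat :=
  match pselect (exists m, forall k, separated_card S eps k -> (k <= m)%N) with
  | left h => let: exist m hm := cid h in
              @ex_maxn (separated_card S eps) m (separated_card0 S eps) hm
  | right _ => 0%N
  end.

Definition Asc_n (eps : R) (n : nat) : R :=
  n%:R^-1 * \sum_(S : {set 'I_n}) (2%:R ^- n) * ln (r_span S eps)%:R.

Definition Asc'_n (eps : R) (n : nat) : R :=
  n%:R^-1 * \sum_(S : {set 'I_n}) (2%:R ^- n) * ln (s_sep S eps)%:R.

Definition Asc (eps : R) : \bar R := limn_esup (fun n => (Asc_n eps n)%:E).
Definition Asc' (eps : R) : \bar R := limn_esup (fun n => (Asc'_n eps n)%:E).

Definition htop_eps (eps : R) : \bar R :=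
  limn_esup (fun n => (n%:R^-1 * ln (r_span [set: 'I_n] eps)%:R)%:E).

Definition htop : \bar R := lim (htop_eps eps @[eps --> 0^'+]).

End Defs.

From Pilot Require Import Defs.
From HB Require Import structures.
From mathcomp Require Import all_boot all_order all_algebra.
From mathcomp Require Import all_classical all_reals all_analysis.
From mathcomp Require Import zify.
Import Order.TTheory GRing.Theory Num.Theory.
Import numFieldNormedType.Exports.
Local Open Scope classical_set_scope.
Local Open Scope ring_scope.
Set Implicit Arguments. Unset Strict Implicit. Unset Printing Implicit Defensive.

(** Since [r(S, eps) <= r(n*, eps)] and the weights [2^-n] sum to 1, [Asc_eps <= h_eps];
and [r <= s <= r] up to doubling the scale, which ties [Asc'] to [Asc].  Conversely,
let [A = S + {0, ..., k-1}] and let [del] control the first [k] iterates at scale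
[eps] (uniform continuity).  An [(S, del)]-spanning set then controls all of [A]
at scale [eps], and each time outside [A] costs a factor [M], the size of a fixed
partition of [X] into sets of diameter [2 eps]:
[log r(n*, 2 eps) <= log r(S, del) + |n* \ A| log M].
A uniformly random [S] misses a given time [i >= k] with probability [2^-k], so
averaging over [S] gives [h_{2 eps} <= Asc_del + 2^(1-k) log M] for every [k]. *)

Section RealFacts.
Context {R : realType}.

Lemma ln_nat_ge0 (k : nat) : 0 <= ln (k%:R : R).
Proof.
case: k => [|k]; first by rewrite ln0.
by apply: ln_ge0; rewrite ler1n.
Qed.

Lemma ler_ln_nat (a b : nat) : (a <= b)%N -> ln (a%:R : R) <= ln b%:R.
Proof.
case: a => [|a] ab; first by rewrite ln0 // ln_nat_ge0.
rewrite ler_ln ?ler_nat // posrE ltr0n //; exact: leq_ltn_trans ab.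
Qed.

Lemma ln_nat_le_mul_pow (b a M j : nat) : (b <= a * M ^ j)%N ->
  ln (b%:R : R) <= ln a%:R + j%:R * ln M%:R.
Proof.
case: b => [|b] h.
  by rewrite ln0 // addr_ge0 ?ln_nat_ge0 // mulr_ge0 ?ln_nat_ge0.
have a0 : (0 < a)%N by case: a h => [|a]; rewrite ?mul0n.
case: j h => [|j] h.
  by rewrite mul0r addr0 ler_ln_nat // -[a]muln1.
have M0 : (0 < M)%N by case: M h => [|M]; rewrite ?exp0n ?muln0.
apply: le_trans (ler_ln_nat h) _.
rewrite natrM lnM ?posrE ?ltr0n ?expn_gt0 ?M0 // natrX lnXn ?ltr0n //.
by rewrite mulr_natl.
Qed.

Lemma exists_pow2_small (c eta : R) : 0 < eta ->
  exists k, c * (2 / 2%:R ^+ k) <= eta.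
Proof.
move=> eta0; pose k := (Num.truncn (2 * c / eta)).+1; exists k.
have ck : 2 * c / eta < k%:R := Num.Theory.truncnS_gt _.
have k_pow : (k%:R : R) <= 2%:R ^+ k by rewrite -natrX ler_nat ltnW // ltn_expl.
rewrite ltr_pdivrMr // in ck.
rewrite mulrA ler_pdivrMr ?exprn_gt0 // mulrC.
by apply: le_trans (ltW ck) _; rewrite mulrC ler_wpM2l // ltW.
Qed.

Lemma sum_pow2_weight n : \sum_(S : {set 'I_n}) (2%:R ^- n : R) = 1.
Proof.
have card_sets : #|{set 'I_n}| = (2 ^ n)%N.
  by rewrite -cardsT -powersetT card_powerset cardsT card_ord.
by rewrite sumr_const card_sets -[_ *+ (2 ^ n)]mulr_natr natrX mulVf.
Qed.

Lemma ler_avg_ln n (f g : {set 'I_n} -> nat) : (forall S, (f S <= g S)%N) ->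
  n%:R^-1 * \sum_(S : {set 'I_n}) (2%:R ^- n) * ln (f S)%:R
  <= n%:R^-1 * \sum_(S : {set 'I_n}) (2%:R ^- n) * ln (g S)%:R :> R.
Proof.
move=> fg; apply: ler_wpM2l; first by rewrite invr_ge0.
apply: ler_sum => S _; apply: ler_wpM2l; first by rewrite invr_ge0 exprn_ge0.
exact: ler_ln_nat.
Qed.

Local Open Scope ereal_scope.

Lemma le_limn_esup_addr (u v : nat -> R) (c : R) N :
  (forall n, (N <= n)%N -> (u n <= v n + c)%R) ->
  limn_esup (fun n => (u n)%:E) <= limn_esup (fun n => (v n)%:E) + c%:E.
Proof.
move=> uv; rewrite -leeBlDr //.
rewrite [X in _ <= X]/limn_esup limf_esupE; apply: le_ereal_inf_tmp => _ [V hV <-].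
rewrite leeBlDr //.
set VN := V `&` [set n | (N <= n)%N].
have VNoo : \oo VN by apply: filterI hV _; exists N => // n.
apply: le_trans (_ : ereal_sup ((fun n => (u n)%:E) @` VN) <= _).
  by rewrite /limn_esup limf_esupE; apply: ereal_inf_lbound; exists VN.
apply: ge_ereal_sup => _ [n [Vn Nn] <-].
apply: le_trans (_ : (v n)%:E + c%:E <= _); first by rewrite -EFinD lee_fin uv.
by apply: leeD2r; apply: ereal_sup_ubound; exists n.
Qed.

Lemma le_limn_esup (u v : nat -> R) : (forall n, (u n <= v n)%R) ->
  limn_esup (fun n => (u n)%:E) <= limn_esup (fun n => (v n)%:E).
Proof.
move=> uv; rewrite -[X in _ <= X]adde0; apply: (@le_limn_esup_addr _ _ 0 0) => n _.
by rewrite addr0.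
Qed.

Definition esup_pos (f : R -> \bar R) : \bar R := ereal_sup (f @` [set` `]0%R, +oo[]).

Lemma cvg_esup_pos (f : R -> \bar R) :
  (forall e e', (0 < e)%R -> (e <= e')%R -> f e' <= f e) ->
  f x @[x --> (0 : R)^'+] --> esup_pos f.
Proof.
move=> f_anti; apply: nonincreasing_at_right_cvge => //.
by move=> a b; rewrite !in_itv /= !andbT => a0 b0 ab; exact: f_anti.
Qed.

Lemma esup_pos_le_approx (f g : R -> \bar R) :
  (forall e eta, (0 < e)%R -> (0 < eta)%R ->
     exists2 e', (0 < e')%R & f e <= g e' + eta%:E) ->
  esup_pos f <= esup_pos g.
Proof.
move=> fg; apply: ge_ereal_sup => _ [e + <-]; rewrite /= in_itv /= andbT => e0.
apply/lee_addgt0Pr => eta eta0; have [e' e'0 fge'] := fg e eta e0 eta0.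
apply: le_trans fge' _; rewrite leeD2r //; apply: ereal_sup_ubound.
by exists e' => //=; rewrite in_itv /= andbT.
Qed.

Lemma esup_pos_le (f g : R -> \bar R) :
  (forall e, (0 < e)%R -> exists2 e', (0 < e')%R & f e <= g e') ->
  esup_pos f <= esup_pos g.
Proof.
move=> fg; apply: esup_pos_le_approx => e eta e0 eta0.
have [e' e'0 fge'] := fg e e0; exists e' => //.
by apply: le_trans fge' _; rewrite leeDl // lee_fin ltW.
Qed.

End RealFacts.

Lemma near_forall_ltn {I : Type} (F : set_system I) (FF : Filter F)
    (P : nat -> I -> Prop) k :
  (forall j, \forall z \near F, P j z) ->
  \forall z \near F, forall j, (j < k)%N -> P j z.
Proof.
move=> FP; elim: k => [|k IH]; first by apply: filterE => z j.
apply: filterS (filterI IH (FP k)) => z [Pz Pkz] j; rewrite ltnS leq_eqVlt.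
by case/orP => [/eqP -> //|]; exact: Pz.
Qed.

Section Thickening.

Definition thicken n k (S : {set 'I_n}) : {set 'I_n} :=
  [set i : 'I_n | [exists s in S, (s <= i < s + k)%N]].

Definition window n k (i : 'I_n) : {set 'I_n} := [set s : 'I_n | (s <= i < s + k)%N].

Lemma window_card n k (i : 'I_n) : (k <= i.+1)%N -> (k <= #|window k i|)%N.
Proof.
move=> ki.
have ltn_sub (j : 'I_k) : (i - j < n)%N by apply: leq_ltn_trans (leq_subr j i) (ltn_ord i).
pose f (j : 'I_k) : 'I_n := Ordinal (ltn_sub j).
have f_inj : injective f.
  move=> j1 j2 /(congr1 val) /= h; apply: val_inj => /=.
  have := ltn_ord j1; have := ltn_ord j2; lia.
rewrite -{1}(card_ord k) -(card_imset _ f_inj); apply: subset_leq_card.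
apply/fintype.subsetP => s /imsetP [j _ ->]; rewrite inE /=.
by have := ltn_ord j; move: ki; clear; lia.
Qed.

Lemma notin_thicken_powerset n k (i : 'I_n) :
  [set S : {set 'I_n} | i \notin thicken k S]%SET = powerset (~: window k i).
Proof.
apply/setP => S; rewrite !inE; apply/idP/idP.
  move=> iS; apply/fintype.subsetP => s sS; rewrite !inE; apply: contra iS => sw.
  by apply/existsP; exists s; rewrite sS.
move=> /fintype.subsetP sub; apply/negP => /existsP [s /andP [sS sw]].
by have := sub s sS; rewrite !inE sw.
Qed.

Lemma sum_ltn_const n k c : (\sum_(i < n) (if (i < k)%N then c else 0) <= k * c)%N.
Proof.
suff : (\sum_(i < n) (if (i < k)%N then c else 0) <= minn n k * c)%N.
  by move=> h; apply: leq_trans h _; rewrite leq_mul2r geq_minr orbT.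
elim: n => [|n IH]; first by rewrite big_ord0.
rewrite big_ord_recr /=; case: ltnP => nk.
  have -> : minn n.+1 k = (minn n k).+1 by lia.
  by rewrite mulSn addnC leq_add2l.
have -> : minn n.+1 k = minn n k by lia.
by rewrite addn0.
Qed.

Lemma card_sum_mem (I : finType) (A : {set I}) : #|A| = (\sum_(x : I) (x \in A : nat))%N.
Proof. by rewrite -sum1_card big_mkcond /=; apply: eq_bigr => x _; case: (x \in A). Qed.

(* A time [i >= k-1] has a window of size [k], so it is missed by at most
   [2^(n-k)] of the [2^n] sets [S]; the first [k] times are bounded by [2^n]. *)
Lemma sum_card_notin_thicken n k :
  ((\sum_(S : {set 'I_n}) #|~: thicken k S|) * 2 ^ k <= (k * 2 ^ k + n) * 2 ^ n)%N.
Proof.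
have -> : (\sum_(S : {set 'I_n}) #|~: thicken k S|) =
          \sum_(i < n) #|[set S : {set 'I_n} | i \notin thicken k S]%SET|.
  rewrite (eq_bigr (fun S => \sum_(i < n) (i \notin thicken k S : nat))); last first.
    by move=> S _; rewrite card_sum_mem; apply: eq_bigr => i _; rewrite inE.
  rewrite exchange_big /=; apply: eq_bigr => i _.
  by rewrite card_sum_mem; apply: eq_bigr => S _; rewrite inE.
rewrite big_distrl /=.
apply: (@leq_trans (\sum_(i < n) ((if (i < k)%N then 2 ^ k * 2 ^ n else 0) + 2 ^ n))).
  apply: leq_sum => i _; rewrite notin_thicken_powerset card_powerset cardsCs card_ord.
  have Wn : (#|window k i| <= n)%N by rewrite -[n in (_ <= n)%N]card_ord max_card.
  rewrite finset.setCK; case: ltnP => ik.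
    rewrite mulnC; apply: leq_trans (leq_addr _ _).
    by rewrite leq_mul2l leq_exp2l ?leq_subr // orbT.
  have kW := window_card (ltnW (leq_ltn_trans ik (ltnSn i))).
  rewrite add0n -expnD leq_exp2l //; lia.
rewrite big_split /= sum_nat_const card_ord mulnDl leq_add2r.
by rewrite -mulnA; apply: sum_ltn_const.
Qed.

End Thickening.

Section BowenCovers.
Context {R : realType} {X : metricType R} (T : X -> X).
Local Notation d := (@mdist R X).

Lemma r_span_le_size n (S : {set 'I_n}) e F :
  spanning T S e F -> (r_span T S e <= size F)%N.
Proof.
move=> sp; rewrite /r_span; case: pselect => [h|[]]; last first.
  by exists (size F); apply/asboolP; exists F.
by case: ex_minnP => m _; apply; apply/asboolP; exists F.
Qed.

Lemma r_span_attained n (S : {set 'I_n}) e : (exists F, spanning T S e F) ->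
  exists F, size F = r_span T S e /\ spanning T S e F.
Proof.
move=> [F sp]; rewrite /r_span; case: pselect => [h|[]]; last first.
  by exists (size F); apply/asboolP; exists F.
by case: ex_minnP => m /asboolP.
Qed.

Lemma spanning_choice n (S : {set 'I_n}) e F : spanning T S e F ->
  exists c : X -> X, forall x, c x \in F /\
    forall i : 'I_n, i \in S -> d (iter i T x) (iter i T (c x)) <= e.
Proof.
move=> sp; have h x : exists y, y \in F /\
    forall i : 'I_n, i \in S -> d (iter i T x) (iter i T y) <= e.
  by case: (sp x) => y yF hy; exists y.
by exists (fun x => proj1_sig (cid (h x))) => x; case: (cid (h x)).
Qed.

Lemma separated_size_le_spanning n (S : {set 'I_n}) e E F :
  Defs.separated T S (e + e) E -> spanning T S e F -> (size E <= size F)%N.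
Proof.
move=> [uE sE] /spanning_choice [c cP].
rewrite -(size_map c); apply: uniq_leq_size; last first.
  by move=> y /mapP [x _ ->]; case: (cP x).
rewrite map_inj_in_uniq // => x y xE yE cxy; apply/eqP; apply: contraT => xy.
have [i iS] := sE x y xE yE xy; rewrite ltNge => /negP [].
apply: le_trans (metric_triangle _ (iter i T (c x)) _) _.
apply: lerD; first by case: (cP x) => _; apply.
by rewrite metric_sym cxy; case: (cP y) => _; apply.
Qed.

Definition bowen_partition n (S : {set 'I_n}) e m := exists phi : X -> nat,
  (forall x, (phi x < m)%N) /\ (forall x y, phi x = phi y ->
     forall i : 'I_n, i \in S -> d (iter i T x) (iter i T y) <= e).

Definition metric_partition e m := exists phi : X -> nat,
  (forall x, (phi x < m)%N) /\ (forall x y, phi x = phi y -> d x y <= e).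

Lemma r_span_le_partition n (S : {set 'I_n}) e m :
  bowen_partition S e m -> (r_span T S e <= m)%N.
Proof.
move=> [phi [phi_lt phi_e]].
pose g (c : nat) : option X := match pselect (exists x, phi x = c) with
  | left h => Some (proj1_sig (cid h)) | right _ => None end.
pose F := pmap g (iota 0 m).
apply: (leq_trans (r_span_le_size (F := F) _)); last first.
  by rewrite size_pmap; apply: leq_trans (count_size _ _) _; rewrite size_iota.
move=> x; case gE: (g (phi x)) => [y|]; last first.
  by move: gE; rewrite /g; case: pselect => // -[]; exists x.
exists y.
  rewrite mem_pmap; apply/mapP; exists (phi x) => //.
  by rewrite mem_iota add0n phi_lt.
apply: phi_e; move: gE; rewrite /g; case: pselect => // h [<-].
by case: (cid h).
Qed.

Lemma spanning_partition n (S : {set 'I_n}) e F :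
  spanning T S e F -> bowen_partition S (e + e) (size F).
Proof.
move=> /spanning_choice [c cP]; exists (fun x => index (c x) F); split.
  by move=> x; rewrite index_mem; case: (cP x).
move=> x y cxy i iS; have {}cxy : c x = c y.
  case: (cP x) => cx _; case: (cP y) => cy _.
  by rewrite -(nth_index x cx) cxy nth_index.
apply: le_trans (metric_triangle _ (iter i T (c x)) _) _.
apply: lerD; first by case: (cP x) => _; apply.
by rewrite metric_sym cxy; case: (cP y) => _; apply.
Qed.

Lemma bowen_partitionU n (A B : {set 'I_n}) e m1 m2 :
  bowen_partition A e m1 -> bowen_partition B e m2 ->
  bowen_partition (A :|: B) e (m1 * m2).
Proof.
move=> [f [f_lt fe]] [g [g_lt ge]].
exists (fun x => f x * m2 + g x)%N; split.
  move=> x; apply: (@leq_trans ((f x).+1 * m2)).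
    by rewrite mulSn addnC ltn_add2r.
  by rewrite leq_mul2r f_lt orbT.
move=> x y fgxy.
have m2_gt0 : (0 < m2)%N by apply: leq_ltn_trans (g_lt x).
have gxy : g x = g y.
  have := congr1 (fun z => z %% m2)%N fgxy.
  by rewrite /= !modnMDl !modn_small.
have fxy : f x = f y.
  have := congr1 (fun z => z %/ m2)%N fgxy.
  by rewrite /= !divnMDl // !divn_small // !addn0.
by move=> i; rewrite inE => /orP[iA|iB]; [exact: fe | exact: ge].
Qed.

Lemma bowen_partition0 n e : bowen_partition (finset.set0 : {set 'I_n}) e 1.
Proof. by exists (fun _ => 0%N); split => // x y _ i; rewrite finset.in_set0. Qed.

Lemma bowen_partition1 n (i : 'I_n) e m : metric_partition e m -> bowen_partition [set i] e m.
Proof.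
move=> [f [f_lt fe]]; exists (fun x => f (iter i T x)); split => // x y fxy j.
by rewrite inE => /eqP ->; apply: fe.
Qed.

Lemma bowen_partition_pow_card n (B : {set 'I_n}) e m :
  metric_partition e m -> bowen_partition B e (m ^ #|B|).
Proof.
move=> me; have [k cB] : exists k, #|B| = k by eexists.
rewrite cB; elim: k B cB => [|k IH] B cB.
  by move/eqP: cB; rewrite cards_eq0 => /eqP ->; exact: bowen_partition0.
have [i iB] : exists i, i \in B by apply/set0Pn; rewrite -card_gt0 cB.
rewrite -(finset.setD1K iB) expnS; apply: bowen_partitionU.
  exact: bowen_partition1.
by apply: IH; rewrite (cardsD1 i B) iB in cB; case: cB.
Qed.

End BowenCovers.

Section CompactSystem.
Context {R : realType} {X : metricType R} (T : X -> X).
Local Notation d := (@mdist R X).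
Hypothesis cpt : compact [set: X].
Hypothesis cT : continuous T.

Lemma continuous_iter j : continuous (iter j T).
Proof.
elim: j => [|j IH] x; first exact: cvg_id.
by apply: (@continuous_comp _ _ _ (iter j T) T x); [exact: IH | exact: cT].
Qed.

Lemma finite_net e : 0 < e -> exists F : seq X, forall x, exists2 y, y \in F & d y x < e.
Proof.
move=> e0; have ncov := (iffLR (compact_near_coveringP _)) cpt.
pose G := filter_from (@setT (seq X)) (fun s => [set t : seq X | {subset s <= t}]).
have FG : Filter G.
  apply: filter_from_filter; first by exists [::].
  move=> s1 s2 _ _; exists (s1 ++ s2) => // t /= st; split => y ys; apply: st;
    by rewrite mem_cat ys ?orbT.
have [x _|s _ sub] := ncov (seq X) G (fun t x => exists2 y, y \in t & d y x < e) FG.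
  exists ([set x' | d x x' < e], [set t : seq X | x \in t]) => /=.
    split; last by exists [:: x] => // t /=; apply; rewrite mem_seq1.
    by apply/metricType_numDomainType.nbhs_mdistP; exists e.
  by move=> [x' t] /= [dx xt]; exists x.
by exists s => x; exact: (sub s (fun _ h => h) x I).
Qed.

Lemma uniform_continuous_iter k e : 0 < e ->
  exists2 del, 0 < del & forall x y, d x y <= del ->
    forall j, (j < k)%N -> d (iter j T x) (iter j T y) <= e.
Proof.
move=> e0; have e20 : 0 < e / 2 by rewrite divr_gt0.
pose P del x := forall y, d x y <= del ->
  forall j, (j < k)%N -> d (iter j T x) (iter j T y) <= e.
suff : \forall del \near 0^'+, [set: X] `<=` P del.
  move=> near_del; have [del [del0 Pdel]] := filter_ex (filterI (nbhs_right_gt 0) near_del).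
  by exists del => // x y; exact: (Pdel x I y).
apply: (iffLR (compact_near_coveringP _) cpt) => x _.
have : \forall z \near x, forall j, (j < k)%N -> d (iter j T x) (iter j T z) < e / 2.
  apply: near_forall_ltn => j.
  exact: (metricType_numDomainType.cvgr_dist_lt (continuous_iter (x:=x)) e20).
move=> /metricType_numDomainType.nbhs_mdistP [eta /= eta0 x_eta].
have eta20 : 0 < eta / 2 by rewrite divr_gt0.
exists ([set x' | d x x' < eta / 2], [set del | del < eta / 2]) => /=.
  split; first by apply/metricType_numDomainType.nbhs_mdistP; exists (eta / 2).
  exact: nbhs_right_lt.
move=> [x' del] /= [xx' del_lt] y x'y j jk.
have xy : d x y < eta.
  apply: le_lt_trans (metric_triangle x x' y) _.
  by rewrite [eta]splitr; apply: ltrD => //; exact: le_lt_trans x'y del_lt.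
have x'_eta : d x x' < eta.
  by apply: lt_trans xx' _; rewrite ltr_pdivrMr // ltr_pMr // ltr1n.
apply: ltW; apply: le_lt_trans (metric_triangle _ (iter j T x) _) _.
by rewrite [e]splitr metric_sym; apply: ltrD; [exact: x_eta | exact: x_eta].
Qed.

Lemma exists_spanning n (S : {set 'I_n}) e : 0 < e -> exists F, spanning T S e F.
Proof.
move=> e0; have [del del0 del_e] := uniform_continuous_iter n e0.
have [F F_net] := finite_net del0; exists F => x.
have [y yF dyx] := F_net x; exists y => // i _.
by apply: del_e (ltn_ord i); rewrite metric_sym ltW.
Qed.

Lemma exists_metric_partition e : 0 < e -> exists m, metric_partition (X:=X) (e + e) m.
Proof.
move=> e0; have [F sp] := exists_spanning [set: 'I_1] e0.
have [f [f_lt fe]] := spanning_partition sp.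
exists (size F), f; split => // x y fxy.
exact: (fe x y fxy ord0 (finset.in_setT _)).
Qed.

Lemma r_span_anti n (S : {set 'I_n}) e e' : 0 < e -> e <= e' ->
  (r_span T S e' <= r_span T S e)%N.
Proof.
move=> e0 ee'; have [F [<- sp]] := r_span_attained (exists_spanning S e0).
apply: r_span_le_size => x; have [y yF hy] := sp x; exists y => // i iS.
exact: le_trans (hy i iS) ee'.
Qed.

Lemma r_span_subset n (A B : {set 'I_n}) e : 0 < e -> A \subset B ->
  (r_span T A e <= r_span T B e)%N.
Proof.
move=> e0 /fintype.subsetP AB; have [F [<- sp]] := r_span_attained (exists_spanning B e0).
apply: r_span_le_size => x; have [y yF hy] := sp x; exists y => // i iA.
exact: hy (AB _ iA).
Qed.

Lemma s_sep_spec n (S : {set 'I_n}) e : 0 < e ->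
  separated_card T S e (s_sep T S e) /\
  forall k, separated_card T S e k -> (k <= s_sep T S e)%N.
Proof.
move=> e0; rewrite /s_sep; case: pselect => [h|[]]; last first.
  have [F sp] := exists_spanning S (divr_gt0 e0 (ltr0n _ 2)).
  exists (size F) => k /asboolP [E [<- sE]].
  by apply: separated_size_le_spanning sp; rewrite -splitr.
by case: (cid h) => m hm; case: ex_maxnP.
Qed.

Lemma s_sep_le_r_span n (S : {set 'I_n}) e : 0 < e ->
  (s_sep T S (e + e) <= r_span T S e)%N.
Proof.
move=> e0; have [/asboolP [E [<- sE]] _] := s_sep_spec S (addr_gt0 e0 e0).
have [F [<- sp]] := r_span_attained (exists_spanning S e0).
exact: separated_size_le_spanning sp.
Qed.

(* A maximal separated set is spanning: a point not spanned by it could be added. *)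
Lemma r_span_le_s_sep n (S : {set 'I_n}) e : 0 < e -> (r_span T S e <= s_sep T S e)%N.
Proof.
move=> e0; have [/asboolP [E [<- [uE sE]]] s_max] := s_sep_spec S e0.
apply: r_span_le_size => x; apply: contrapT => nsp.
have xE : x \notin E.
  by apply/negP => xE; apply: nsp; exists x => // i _; rewrite mdistxx ltW.
have far y : y \in E -> exists2 i : 'I_n, i \in S & e < d (iter i T x) (iter i T y).
  move=> yE; apply: contrapT => near_y; apply: nsp; exists y => // i iS.
  by rewrite leNgt; apply/negP => lt; apply: near_y; exists i.
have sep_xE : Defs.separated T S e (x :: E).
  split; first by rewrite /= xE.
  move=> y z; rewrite !inE => /orP[/eqP ->|yE] /orP[/eqP ->|zE] yz.
  - by rewrite eqxx in yz.
  - exact: far.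
  - by have [i iS lt] := far y yE; exists i => //; rewrite metric_sym.
  - exact: sE.
have xE_card : separated_card T S e (size (x :: E)) by apply/asboolP; exists (x :: E).
by have := s_max _ xE_card; rewrite ltnn.
Qed.

Lemma s_sep_anti n (S : {set 'I_n}) e e' : 0 < e -> e <= e' ->
  (s_sep T S e' <= s_sep T S e)%N.
Proof.
move=> e0 ee'; have e'0 : 0 < e' by apply: lt_le_trans ee'.
have [/asboolP [E [<- [uE sE]]] _] := s_sep_spec S e'0.
have [_ s_max] := s_sep_spec S e0; apply: s_max; apply/asboolP; exists E.
split=> //; split => // x y xE yE xy; have [i iS lt] := sE x y xE yE xy.
by exists i => //; exact: le_lt_trans lt.
Qed.

(* Uniform continuity lets a (S, del)-spanning set control every time of
   [thicken k S]; each remaining time costs a factor [M]. *)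
Lemma r_span_setT_le_thicken n k e del M (S : {set 'I_n}) : 0 < del ->
  (forall x y, d x y <= del -> forall j, (j < k)%N -> d (iter j T x) (iter j T y) <= e) ->
  metric_partition (X:=X) (e + e) M ->
  (r_span T (finset.setT : {set 'I_n}) (e + e)
     <= r_span T S del * M ^ #|~: thicken k S|)%N.
Proof.
move=> del0 del_e Mpart.
have [F [<- sp]] := r_span_attained (exists_spanning S del0).
apply: r_span_le_partition.
rewrite -(finset.setUCr (thicken k S)); apply: bowen_partitionU; last first.
  exact: bowen_partition_pow_card.
apply: spanning_partition => x; have [y yF hy] := sp x; exists y => // i.
rewrite inE => /existsP [s /andP [sS /andP [si isk]]].
rewrite -(subnK si) !iterD; apply: del_e; first exact: hy.
by rewrite ltn_subLR.
Qed.

Lemma htop_term_le_Asc_term n k e del M : 0 < del ->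
  (forall x y, d x y <= del -> forall j, (j < k)%N -> d (iter j T x) (iter j T y) <= e) ->
  metric_partition (X:=X) (e + e) M -> (0 < n)%N -> (k * 2 ^ k <= n)%N ->
  n%:R^-1 * ln (r_span T (finset.setT : {set 'I_n}) (e + e))%:R
    <= Asc_n T del n + ln M%:R * (2 / 2%:R ^+ k).
Proof.
move=> del0 del_e Mpart n0 kn.
set b := r_span T _ _; pose q : R := 2%:R ^- n.
have q0 : 0 <= q by rewrite /q invr_ge0 exprn_ge0.
have avg : ln (b%:R : R) <= \sum_(S : {set 'I_n}) q * ln (r_span T S del)%:R
           + ln M%:R * (q * (\sum_(S : {set 'I_n}) #|~: thicken k S|)%:R).
  have -> : ln (b%:R : R) = \sum_(S : {set 'I_n}) q * ln b%:R.
    by rewrite -mulr_suml sum_pow2_weight mul1r.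
  rewrite natr_sum mulr_sumr mulr_sumr -big_split /=.
  apply: ler_sum => S _; rewrite [ln M%:R * _]mulrCA -mulrDr ler_wpM2l //.
  rewrite [ln M%:R * _]mulrC; apply/ln_nat_le_mul_pow.
  exact: r_span_setT_le_thicken.
have missed : q * (\sum_(S : {set 'I_n}) #|~: thicken k S|)%:R <= 2 * n%:R / 2%:R ^+ k.
  rewrite ler_pdivlMr ?exprn_gt0 // /q mulrAC -mulrA ler_pdivrMl ?exprn_gt0 //.
  rewrite -!natrX -!natrM ler_nat mulnC [(2 ^ n * _)%N]mulnC.
  apply: leq_trans (sum_card_notin_thicken n k) _.
  by rewrite leq_mul2r; apply/orP; right; lia.
have n_gt0 : (0 : R) < n%:R by rewrite ltr0n.
rewrite /Asc_n -/q -(ler_pM2l n_gt0) mulrA mulfV ?gt_eqF // mul1r.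
rewrite mulrDr mulrA mulfV ?gt_eqF // mul1r.
apply: le_trans avg _; rewrite lerD2l [n%:R * (ln M%:R * _)]mulrCA.
apply: ler_wpM2l; first exact: ln_nat_ge0.
by apply: le_trans missed _; rewrite mulrA [n%:R * _]mulrC.
Qed.

Lemma Asc_le_Asc' e : 0 < e -> (Asc T e <= Asc' T e)%E.
Proof. by move=> e0; apply: le_limn_esup => n; apply: ler_avg_ln => S; exact: r_span_le_s_sep. Qed.

Lemma Asc'_le_Asc e : 0 < e -> (Asc' T (e + e) <= Asc T e)%E.
Proof. by move=> e0; apply: le_limn_esup => n; apply: ler_avg_ln => S; exact: s_sep_le_r_span. Qed.

Lemma Asc_le_htop_eps e : 0 < e -> (Asc T e <= htop_eps T e)%E.
Proof.
move=> e0; apply: le_limn_esup => n.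
apply: le_trans (ler_avg_ln (g := fun _ => r_span T (finset.setT : {set 'I_n}) e) _) _.
  by move=> S; apply: r_span_subset => //; exact: finset.subsetT.
by rewrite -mulr_suml sum_pow2_weight mul1r.
Qed.

Lemma Asc_anti e e' : 0 < e -> e <= e' -> (Asc T e' <= Asc T e)%E.
Proof. by move=> e0 ee'; apply: le_limn_esup => n; apply: ler_avg_ln => S; exact: r_span_anti. Qed.

Lemma Asc'_anti e e' : 0 < e -> e <= e' -> (Asc' T e' <= Asc' T e)%E.
Proof. by move=> e0 ee'; apply: le_limn_esup => n; apply: ler_avg_ln => S; exact: s_sep_anti. Qed.

Lemma htop_eps_anti e e' : 0 < e -> e <= e' -> (htop_eps T e' <= htop_eps T e)%E.
Proof.
move=> e0 ee'; apply: le_limn_esup => n; rewrite ler_wpM2l ?invr_ge0 //.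
exact/ler_ln_nat/r_span_anti.
Qed.

Lemma htop_eps_le_Asc e : 0 < e -> exists M, forall k, exists2 del, 0 < del &
  (htop_eps T (e + e) <= Asc T del + (ln M%:R * (2 / 2%:R ^+ k))%:E)%E.
Proof.
move=> e0; have [M Mpart] := exists_metric_partition e0.
exists M => k; have [del del0 del_e] := uniform_continuous_iter k e0.
exists del => //; apply: (@le_limn_esup_addr _ _ _ _ (k * 2 ^ k).+1) => n kn.
apply: htop_term_le_Asc_term => //; first exact: leq_trans kn.
exact: ltnW.
Qed.

Lemma esup_pos_Asc : esup_pos (Asc T) = esup_pos (htop_eps T).
Proof.
apply/eqP; rewrite eq_le; apply/andP; split.
  by apply: esup_pos_le => e e0; exists e => //; exact: Asc_le_htop_eps.
apply: esup_pos_le_approx => e eta e0 eta0.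
have e20 : 0 < e / 2 by rewrite divr_gt0.
have [M htop_Asc] := htop_eps_le_Asc e20; have [k Mk] := exists_pow2_small (ln M%:R) eta0.
have [del del0 htop_le] := htop_Asc k; exists del => //.
by rewrite [e]splitr; apply: le_trans htop_le _; apply: leeD; rewrite ?lee_fin.
Qed.

Lemma esup_pos_Asc' : esup_pos (Asc' T) = esup_pos (Asc T).
Proof.
apply/eqP; rewrite eq_le; apply/andP; split; apply: esup_pos_le => e e0.
  exists (e / 2); first by rewrite divr_gt0.
  by rewrite [e in Asc' T e]splitr; apply: Asc'_le_Asc; rewrite divr_gt0.
by exists e => //; exact: Asc_le_Asc'.
Qed.

End CompactSystem.

Theorem corollaryA14 (R : realType) (X : metricType R) (T : X -> X) :
  compact [set: X] -> continuous T ->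
  (Asc T eps @[eps --> 0^'+] --> htop T) /\
  (Asc' T eps @[eps --> 0^'+] --> htop T).
Proof.
move=> cpt cT.
have htopE : htop T = esup_pos (htop_eps T).
  by rewrite /htop (cvg_lim _ (cvg_esup_pos (htop_eps_anti cpt cT))).
rewrite htopE -(esup_pos_Asc cpt cT); split.
- exact/cvg_esup_pos/Asc_anti.
- by rewrite -(esup_pos_Asc' cpt cT); exact/cvg_esup_pos/Asc'_anti.
Qed.
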